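(* Let $n\equiv 3\pmod 4$ with $n>3$. Let $1\le r<m$, let $M_r\in\mathfrak{C}_r$, and suppose $\det\tilde M_r>0$. Then $$\max\{\det E: E\in\mathfrak{E}_m\}>(n-3)\max\{\det E: E\in\mathfrak{E}_{m-1}\}.$$
   Context: Fix an integer $n\equiv 3\pmod 4$, $n>3$. For $m\ge1$, $\mathfrak{C}_m$ is the set of symmetric positive definite $m\times m$ integer matrices $C=(c_{ij})$ with $c_{ii}=n$ and $c_{ij}\equiv n\pmod 4$ for all $i,j$ (a finite set, since positive definiteness forces $|c_{ij}|<n$ for $i\neq j$). Given a fixed $M_r\in\mathfrak{C}_r$, for $m\ge r$, $\mathfrak{E}_m$ is the set of $E_m\in\mathfrak{C}_m$ whose leading $r\times r$ submatrix is $M_r$. For a square matrix $C$ of order $m$, $\tilde C$ denotes the matrix obtained from $C$ by replacing its $(m,m)$ entry by $3$. *)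

From HB Require Import structures.
From mathcomp Require Import all_boot all_order all_algebra.
From mathcomp Require Import Rstruct.
From Stdlib Require Rdefinitions.
Set Implicit Arguments. Unset Strict Implicit. Unset Printing Implicit Defensive.
Import Order.TTheory GRing.Theory Num.Theory.
Local Open Scope ring_scope.

Definition posdef (m : nat) (C : 'M[int]_m) : Prop :=
  forall x : 'cV[Rdefinitions.R]_m, x != 0 ->
    0 < ((x^T *m map_mx (fun z : int => (z%:~R : Rdefinitions.R)) C *m x) ord0 ord0).

Definition in_frakC (n : int) (m : nat) (C : 'M[int]_m) : Prop :=
  [/\ C^T = C, posdef C,
      (forall i : 'I_m, C i i = n) &
      (forall i j : 'I_m, (C i j = n %[mod 4])%Z)].

Definition leading (m r : nat) (E : 'M[int]_m) (M : 'M[int]_r) : Prop :=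
  forall (i j : 'I_r) (i' j' : 'I_m),
    (i : nat) = i' -> (j : nat) = j' -> E i' j' = M i j.

Definition in_frakE (n : int) (r : nat) (Mr : 'M[int]_r) (m : nat) (E : 'M[int]_m) : Prop :=
  in_frakC n E /\ leading E Mr.

Definition tilde (m : nat) (C : 'M[int]_m) : 'M[int]_m :=
  \matrix_(i, j) if ((i : nat) == m.-1) && ((j : nat) == m.-1) then 3 else C i j.

(* Let E be symmetric with last diagonal entry c, write E[c := b] for E with that entry
   replaced by b, and E (+) b for the matrix obtained from E by duplicating its last row and
   column, the two copies meeting in the entry b.  Subtracting the last two rows gives
     det (E (+) b) = (c - b) (det E + det E[c := b]),
   and the identity
     2 q_{E (+) b}(y, s, t) = q_E(y, s + t) + q_{E[c := b]}(y, s + t) + (c - b) (s - t)^2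
   shows that E (+) b is positive definite when E and E[c := b] are and b < c.
   For E in 𝔈_k with det Ẽ > 0, Sylvester's criterion makes Ẽ = E[n := 3] positive definite,
   so E (+) 3 lies in 𝔈_(k+1) and det (E (+) 3) = (n - 3) (det E + det Ẽ) > (n - 3) det E.
   Hence if E_k maximises det over 𝔈_k and det Ẽ_k > 0, a maximiser E_(k+1) of det over
   𝔈_(k+1) satisfies det Ẽ_(k+1) = det E_(k+1) - (n - 3) det (lead E_(k+1)) > 0.  Induction
   from E_r = M_r then gives the theorem, with E = E_(m-1) (+) 3. *)

From HB Require Import structures.
From mathcomp Require Import all_boot all_order all_algebra perm.
From mathcomp Require Import ring lra zify.
From mathcomp Require Import Rstruct.
From Stdlib Require Rdefinitions Classical_Prop.
Set Implicit Arguments. Unset Strict Implicit. Unset Printing Implicit Defensive.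
Import Order.TTheory GRing.Theory Num.Theory.
Local Open Scope ring_scope.

(** * Bordered matrices *)

Definition lead_mx (T : Type) k (M : 'M[T]_k.+1) : 'M[T]_k := row' ord_max (col' ord_max M).

Definition lastcol (T : Type) k (M : 'M[T]_k.+1) : 'cV[T]_k := row' ord_max (col ord_max M).

Definition set_corner (T : Type) k (M : 'M[T]_k.+1) c : 'M[T]_k.+1 :=
  \matrix_(i, j) if (i == ord_max) && (j == ord_max) then c else M i j.

Definition setrow (T : Type) k (A : 'M[T]_k) i (v : 'rV[T]_k) : 'M[T]_k :=
  \matrix_(a, b) if a == i then v 0 b else A a b.

Lemma mx_val_congr (T : Type) k (A : 'M[T]_k) (i j i' j' : 'I_k) :
  (i : nat) = i' -> (j : nat) = j' -> A i j = A i' j'.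
Proof. by move=> /val_inj-> /val_inj->. Qed.

Lemma lift_max_eqF k (i : 'I_k) : (lift ord_max i == ord_max) = false.
Proof. by apply/negbTE; rewrite eq_sym neq_lift. Qed.

Lemma sum_ord_max (V : nmodType) k (F : 'I_k.+1 -> V) :
  \sum_i F i = F ord_max + \sum_(i < k) F (lift ord_max i).
Proof. exact: bigD1_ord. Qed.

Section Bordered.
Variables (T : Type) (k : nat).
Implicit Types (M : 'M[T]_k.+1).

Lemma lead_mx_sym M : M^T = M -> (lead_mx M)^T = lead_mx M.
Proof. by move=> sM; apply/matrixP => i j; rewrite !mxE -[in LHS]sM mxE. Qed.

Lemma set_corner_sym M c : M^T = M -> (set_corner M c)^T = set_corner M c.
Proof. by move=> sM; apply/matrixP => i j; rewrite !mxE andbC -[in LHS]sM mxE. Qed.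

Lemma lead_set_corner M c : lead_mx (set_corner M c) = lead_mx M.
Proof. by apply/matrixP => i j; rewrite !mxE lift_max_eqF. Qed.

Lemma lastcol_set_corner M c : lastcol (set_corner M c) = lastcol M.
Proof. by apply/matrixP => i j; rewrite !mxE lift_max_eqF. Qed.

Lemma map_set_corner (U : Type) (f : T -> U) M c :
  map_mx f (set_corner M c) = set_corner (map_mx f M) (f c).
Proof. by apply/matrixP => i j; rewrite !mxE; case: ifP. Qed.

End Bordered.

(** * Laplace expansion along a row *)

Lemma sum_delta_mulr (R : pzSemiRingType) k (j : 'I_k) (F : 'I_k -> R) :
  \sum_l (delta_mx 0 j : 'rV[R]_k) 0 l * F l = F j.
Proof.
rewrite (bigD1 j) //= big1 => [|l /negbTE nl]; last by rewrite mxE nl mul0r.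
by rewrite mxE !eqxx mul1r addr0.
Qed.

Section Laplace.
Variables (R : comPzRingType) (k : nat).
Implicit Types (A : 'M[R]_k) (v : 'rV[R]_k).

Lemma setrow_id A i : setrow A i (row i A) = A.
Proof. by apply/matrixP => a b; rewrite !mxE; case: eqP => [->|]. Qed.

Lemma cofactor_setrow A i v j : cofactor (setrow A i v) i j = cofactor A i j.
Proof.
rewrite /cofactor; congr (_ * \det _); apply/matrixP => a b.
by rewrite !mxE eq_sym (negbTE (neq_lift _ _)).
Qed.

Lemma det_setrow A i v : \det (setrow A i v) = \sum_j v 0 j * cofactor A i j.
Proof.
rewrite (expand_det_row _ i); apply: eq_bigr => j _.
by rewrite cofactor_setrow mxE eqxx.
Qed.

Lemma det_setrow_copy A i j : i != j -> \det (setrow A i (row j A)) = 0.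
Proof.
move=> nij; apply: (determinant_alternate nij) => b.
by rewrite !mxE eqxx eq_sym (negbTE nij).
Qed.

Lemma det_row_shear A i j a v :
  i != j -> row i A = row j A + a *: v ->
  \det A = a * \sum_l v 0 l * cofactor A i l.
Proof.
move=> nij rowi; rewrite -[in LHS](setrow_id A i) rowi det_setrow.
under eq_bigr do rewrite !mxE mulrDl -mulrA.
rewrite big_split /= -mulr_sumr.
suff -> : \sum_l A j l * cofactor A i l = \det (setrow A i (row j A)).
  by rewrite det_setrow_copy // add0r.
by rewrite det_setrow; apply: eq_bigr => l _; rewrite mxE.
Qed.

End Laplace.

Section Corner.
Variables (R : comPzRingType) (k : nat).
Implicit Types (M : 'M[R]_k.+1).

Lemma cofactor_corner M : cofactor M ord_max ord_max = \det (lead_mx M).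
Proof. by rewrite /cofactor -signr_odd addnn odd_double mul1r. Qed.

Lemma det_set_corner M c :
  \det (set_corner M c) = \det M + (c - M ord_max ord_max) * \det (lead_mx M).
Proof.
have -> : set_corner M c =
    setrow M ord_max (row ord_max M + (c - M ord_max ord_max) *: delta_mx 0 ord_max).
  apply/matrixP => i j; rewrite !mxE; case: eqP => [->|] //=.
  by case: eqP => [->|_]; rewrite ?eqxx ?mulr1 ?mulr0 ?addr0 // addrC subrK.
rewrite det_setrow (expand_det_row M ord_max) -cofactor_corner.
under eq_bigr do rewrite !mxE mulrDl.
rewrite big_split /=; congr (_ + _).
rewrite (bigD1 ord_max) //= big1 => [|j /negbTE nj]; last by rewrite nj mulr0 mul0r.
by rewrite eqxx mulr1 addr0.
Qed.

End Corner.

(** * Quadratic forms and Schur complements *)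

Section QuadraticForm.
Variable R : realFieldType.

Definition bform k (M : 'M[R]_k) (y z : 'cV[R]_k) : R := (y^T *m M *m z) ord0 ord0.
Definition qform k (M : 'M[R]_k) (x : 'cV[R]_k) : R := bform M x x.
Definition posdef_mx k (M : 'M[R]_k) : Prop := forall x, x != 0 -> 0 < qform M x.
Definition vdot k (a b : 'cV[R]_k) : R := \sum_i a i 0 * b i 0.
Definition col_ext k (y : 'cV[R]_k) (u : R) : 'cV[R]_k.+1 :=
  \col_i (if unlift ord_max i is Some j then y j 0 else u).

Section FixedDim.
Variable k : nat.
Implicit Types (M A : 'M[R]_k) (x y z w : 'cV[R]_k).

Lemma qformE M x : qform M x = \sum_i \sum_j x i 0 * M i j * x j 0.
Proof.
rewrite /qform /bform mxE exchange_big /=; apply: eq_bigr => i _.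
by rewrite mxE mulr_suml; apply: eq_bigr => j _; rewrite !mxE.
Qed.

Lemma bform_sym M y z : M^T = M -> bform M z y = bform M y z.
Proof.
move=> sM; have tr (N : 'M[R]_1) : N 0 0 = N^T 0 0 by rewrite mxE.
by rewrite /bform tr !trmx_mul trmxK sM mulmxA.
Qed.

Lemma qformD M y z : M^T = M -> qform M (y + z) = qform M y + 2 * bform M y z + qform M z.
Proof.
move=> sM; rewrite /qform /bform [(y + z)^T]linearD /= !mulmxDl !mulmxDr.
have addE (A B : 'M[R]_1) : (A + B) ord0 ord0 = A ord0 ord0 + B ord0 ord0 by rewrite mxE.
by rewrite !addE -!/(bform _ _ _) (bform_sym y z sM); ring.
Qed.

Lemma bformZr M a y z : bform M y (a *: z) = a * bform M y z.
Proof. by rewrite /bform -scalemxAr mxE. Qed.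

Lemma qformZ M a y : qform M (a *: y) = a ^+ 2 * qform M y.
Proof.
have scaleE (A : 'M[R]_1) b : (b *: A) ord0 ord0 = b * A ord0 ord0 by rewrite mxE.
rewrite /qform /bform [(a *: y)^T]linearZ /= -scalemxAl -!scalemxAr !scaleE.
by rewrite -scalemxAl scaleE mulrA.
Qed.

Lemma qform0 M : qform M 0 = 0.
Proof. by rewrite /qform /bform trmx0 !mul0mx mxE. Qed.

Lemma bform_vdot A y w : bform A y w = vdot (A *m w) y.
Proof. by rewrite /bform -mulmxA mxE /vdot; apply: eq_bigr => i _; rewrite mxE mulrC. Qed.

Lemma bform_delta M i j : bform M (delta_mx i 0) (delta_mx j 0) = M i j.
Proof. by rewrite /bform trmx_delta -rowE -colE !mxE. Qed.

Lemma posdef_qform_ge0 M x : posdef_mx M -> 0 <= qform M x.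
Proof. by move=> pM; have [->|/pM/ltW] := eqVneq x 0; rewrite ?qform0. Qed.

End FixedDim.

Section Border.
Variable k : nat.
Implicit Types (M : 'M[R]_k.+1) (x : 'cV[R]_k.+1) (y : 'cV[R]_k).

Lemma col_ext_lift y u i : col_ext y u (lift ord_max i) 0 = y i 0.
Proof. by rewrite mxE liftK. Qed.

Lemma col_ext_max y u : col_ext y u ord_max 0 = u.
Proof. by rewrite mxE unlift_none. Qed.

Lemma row'_col_ext y u : row' ord_max (col_ext y u) = y.
Proof. by apply/matrixP => i j; rewrite (ord1 j) mxE col_ext_lift. Qed.

Lemma col_extK x : col_ext (row' ord_max x) (x ord_max 0) = x.
Proof.
apply/matrixP => i j; rewrite (ord1 j) mxE.
by case: unliftP => [i' ->|->]; rewrite ?mxE.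
Qed.

Lemma col_ext_eq0 y u : (col_ext y u == 0) = (y == 0) && (u == 0).
Proof.
apply/eqP/andP => [h|[/eqP -> /eqP ->]].
  split; apply/eqP; last by rewrite -(col_ext_max y u) h mxE.
  by rewrite -(row'_col_ext y u) h; apply/matrixP => i j; rewrite !mxE.
by apply/matrixP => i j; rewrite !mxE; case: unlift => [?|]; rewrite ?mxE.
Qed.

Lemma qform_lastE M x : M^T = M ->
  qform M x = qform (lead_mx M) (row' ord_max x)
    + 2 * x ord_max 0 * vdot (lastcol M) (row' ord_max x)
    + M ord_max ord_max * x ord_max 0 ^+ 2.
Proof.
move=> sM; have sym i j : M j i = M i j by rewrite -[in LHS]sM mxE.
have -> : qform (lead_mx M) (row' ord_max x) = \sum_(i < k) \sum_(j < k)
    x (lift ord_max i) 0 * M (lift ord_max i) (lift ord_max j) * x (lift ord_max j) 0.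
  by rewrite qformE; apply: eq_bigr => i _; apply: eq_bigr => j _; rewrite !mxE.
have -> : vdot (lastcol M) (row' ord_max x) =
    \sum_(i < k) M (lift ord_max i) ord_max * x (lift ord_max i) 0.
  by apply: eq_bigr => i _; rewrite !mxE.
rewrite [LHS]qformE !sum_ord_max.
under [X in _ + X = _]eq_bigr do rewrite sum_ord_max.
rewrite big_split /=.
have -> : \sum_(i < k) x ord_max 0 * M ord_max (lift ord_max i) * x (lift ord_max i) 0 =
          x ord_max 0 * \sum_(i < k) M (lift ord_max i) ord_max * x (lift ord_max i) 0.
  by rewrite mulr_sumr; apply: eq_bigr => i _; rewrite sym mulrA.
have -> : \sum_(i < k) x (lift ord_max i) 0 * M (lift ord_max i) ord_max * x ord_max 0 =
          x ord_max 0 * \sum_(i < k) M (lift ord_max i) ord_max * x (lift ord_max i) 0.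
  by rewrite mulr_sumr; apply: eq_bigr => i _; ring.
ring.
Qed.

Definition schur_compl M : R :=
  M ord_max ord_max - vdot (lastcol M) (invmx (lead_mx M) *m lastcol M).

Lemma qform_schur M x : M^T = M -> lead_mx M \in unitmx ->
  qform M x = qform (lead_mx M) (row' ord_max x + x ord_max 0 *: (invmx (lead_mx M) *m lastcol M))
    + schur_compl M * x ord_max 0 ^+ 2.
Proof.
move=> sM uA; set w := invmx _ *m _.
have Aw : lead_mx M *m w = lastcol M by rewrite /w mulKVmx.
rewrite qform_lastE // qformD ?lead_mx_sym // bformZr qformZ bform_vdot Aw.
by rewrite [qform _ w]/qform bform_vdot Aw /schur_compl -/w; ring.
Qed.

Lemma det_schur M : M^T = M -> lead_mx M \in unitmx ->
  \det M = schur_compl M * \det (lead_mx M).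
Proof.
move=> sM uA; rewrite /schur_compl; set w := invmx _ *m _.
have Aw : lead_mx M *m w = lastcol M by rewrite /w mulKVmx.
have sym i j : M j i = M i j by rewrite -[in LHS]sM mxE.
pose B := set_corner M (vdot (lastcol M) w).
have kerB : B *m col_ext w (-1) = 0.
  apply/matrixP => i j; rewrite (ord1 j) !mxE sum_ord_max col_ext_max mulrN1.
  under eq_bigr do rewrite col_ext_lift.
  apply/eqP; rewrite addrC subr_eq0; apply/eqP.
  case: (unliftP ord_max i) => [i' ->|->].
    rewrite mxE lift_max_eqF /=.
    have := congr1 (fun X : 'cV[R]_k => X i' 0) Aw; rewrite !mxE => <-.
    by apply: eq_bigr => j' _; rewrite !mxE lift_max_eqF.
  rewrite mxE !eqxx /vdot; apply: eq_bigr => j' _.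
  by rewrite !mxE lift_max_eqF andbF sym.
have detB : \det B = 0.
  apply/eqP; apply: contraT => nzB.
  have uB : B \in unitmx by rewrite unitmxE unitfE.
  have : col_ext w (-1) = 0 by rewrite -(mulKmx uB (col_ext w (-1))) kerB mulmx0.
  by move/eqP; rewrite col_ext_eq0 oppr_eq0 oner_eq0 andbF.
move: detB; rewrite det_set_corner => /eqP.
by rewrite addr_eq0 => /eqP ->; ring.
Qed.

Lemma posdef_lead M : M^T = M -> posdef_mx M -> posdef_mx (lead_mx M).
Proof.
move=> sM pM y nzy; have := pM (col_ext y 0).
rewrite qform_lastE // row'_col_ext col_ext_max col_ext_eq0 (negbTE nzy) /=.
by rewrite expr0n /= !mulr0 mul0r !addr0; apply.
Qed.

End Border.

Lemma posdef_det_gt0 k (M : 'M[R]_k) : M^T = M -> posdef_mx M -> 0 < \det M.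
Proof.
elim: k M => [|k IH] M sM pM; first by rewrite det_mx00.
have dA := IH _ (lead_mx_sym sM) (posdef_lead sM pM).
have uA : lead_mx M \in unitmx by rewrite unitmxE unitfE gt_eqF.
rewrite det_schur // pmulr_lgt0 //.
have := pM (col_ext (- (invmx (lead_mx M) *m lastcol M)) 1).
rewrite qform_schur // row'_col_ext col_ext_max col_ext_eq0 oner_eq0 andbF.
by rewrite scale1r addNr qform0 add0r expr1n mulr1; apply.
Qed.

Lemma posdef_lead_det k (M : 'M[R]_k.+1) :
  M^T = M -> posdef_mx (lead_mx M) -> 0 < \det M -> posdef_mx M.
Proof.
move=> sM pA; have dA := posdef_det_gt0 (lead_mx_sym sM) pA.
have uA : lead_mx M \in unitmx by rewrite unitmxE unitfE gt_eqF.
rewrite det_schur // pmulr_lgt0 // => sc x nzx; rewrite qform_schur //.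
have [u0|u0] := eqVneq (x ord_max 0) 0.
  rewrite u0 scale0r addr0 expr0n /= mulr0 addr0; apply: pA.
  by apply: contra nzx => /eqP y0; rewrite -[x]col_extK y0 u0 col_ext_eq0 !eqxx.
apply: ltr_wpDl; first exact: posdef_qform_ge0.
by rewrite mulr_gt0 // exprn_even_gt0.
Qed.

End QuadraticForm.

(** * Twin matrices *)

Definition clamp_ord k (i : 'I_k.+2) : 'I_k.+1 := inord (minn i k).

Lemma clamp_ordE k (i : 'I_k.+2) : clamp_ord i = minn i k :> nat.
Proof. by rewrite inordK // ltnS geq_minr. Qed.

(* For E = [[A, a], [a^T, c]], [twin_mx E b] = [[A, a, a], [a^T, c, b], [a^T, b, c]];
   [clamp_ord] sends the new index k + 1 back to k. *)
Definition twin_mx (T : Type) k (E : 'M[T]_k.+1) (b : T) : 'M[T]_k.+2 :=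
  \matrix_(i, j)
    if ((i : nat) == k.+1) && ((j : nat) == k) || ((i : nat) == k) && ((j : nat) == k.+1)
    then b else E (clamp_ord i) (clamp_ord j).

Section Twin.
Variables (T : Type) (k : nat) (E : 'M[T]_k.+1) (b : T).

Lemma twin_lift (i j : 'I_k.+1) : twin_mx E b (lift ord_max i) (lift ord_max j) = E i j.
Proof.
have hi := ltn_ord i; have hj := ltn_ord j; rewrite mxE !lift_max.
rewrite ifF; last by apply/negP; case/orP => /andP[/eqP ? /eqP ?]; lia.
by apply: mx_val_congr; rewrite clamp_ordE /= /bump leqNgt ?hi ?hj /=; lia.
Qed.

Lemma lead_twin : lead_mx (twin_mx E b) = E.
Proof. by apply/matrixP => i j; rewrite 2!mxE twin_lift. Qed.

Lemma twin_corner : twin_mx E b ord_max ord_max = E ord_max ord_max.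
Proof.
rewrite mxE ifF; last by apply/negP; case/orP => /andP[/eqP ? /eqP ?]; lia.
by apply: mx_val_congr; rewrite clamp_ordE /=; lia.
Qed.

Lemma twin_sym : E^T = E -> (twin_mx E b)^T = twin_mx E b.
Proof.
move=> sE; apply/matrixP => i j; rewrite !mxE -[in LHS]sE mxE.
by congr (if _ then _ else _); apply/idP/idP; lia.
Qed.

End Twin.

Lemma map_twin (T U : Type) (f : T -> U) k (E : 'M[T]_k.+1) b :
  map_mx f (twin_mx E b) = twin_mx (map_mx f E) (f b).
Proof. by apply/matrixP => i j; rewrite !mxE; case: ifP. Qed.

Section TwinDet.
Variables (R : comPzRingType) (k : nat) (E : 'M[R]_k.+1) (b : R).

Let kk : 'I_k.+2 := lift ord_max ord_max.

Let kkE : kk = k :> nat.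
Proof. exact: lift_max. Qed.

Lemma cofactor_twin_corner : cofactor (twin_mx E b) ord_max ord_max = \det E.
Proof. by rewrite cofactor_corner lead_twin. Qed.

Lemma cofactor_twin_off : cofactor (twin_mx E b) ord_max kk = - \det (set_corner E b).
Proof.
rewrite /cofactor kkE /= addSn addnn -signr_odd /= odd_double mulN1r; congr (- \det _).
apply/matrixP => i j; rewrite !mxE.
have hi := ltn_ord i; have hj := ltn_ord j.
have li : lift ord_max i = i :> nat by exact: lift_max.
have lj : lift kk j = (if (j < k)%N then j : nat else k.+1) :> nat.
  change (bump kk j = if (j < k)%N then j : nat else k.+1).
  by rewrite kkE /bump leqNgt; case: ltnP => //= ?; lia.
have ci : clamp_ord (lift ord_max i) = i :> nat by rewrite clamp_ordE li; lia.
have cj : clamp_ord (lift kk j) = j :> nat by rewrite clamp_ordE lj; case: ltnP; lia.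
have eq_max (l : 'I_k.+1) : (l == ord_max) = ((l : nat) == k) by [].
rewrite li lj (mx_val_congr E ci cj) !eq_max.
by case: ltnP => hjk; case: ifP => c1; case: ifP => c2 //; exfalso; lia.
Qed.

Lemma row_twin_last : row ord_max (twin_mx E b) =
  row kk (twin_mx E b) + (E ord_max ord_max - b) *: (delta_mx 0 ord_max - delta_mx 0 kk).
Proof.
have ck : clamp_ord ord_max = clamp_ord kk by apply: ord_inj; rewrite !clamp_ordE kkE /=; lia.
have cmax : clamp_ord kk = ord_max by apply: ord_inj; rewrite !clamp_ordE kkE /=; lia.
apply/matrixP => i j; rewrite (ord1 i) !mxE eqxx ck cmax kkE /=.
have eq_max : (j == ord_max) = ((j : nat) == k.+1) by [].
have eq_kk : (j == kk) = ((j : nat) == kk) by [].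
have cj : (k <= j)%N -> clamp_ord j = ord_max.
  by move=> kj; apply: ord_inj; rewrite clamp_ordE /=; lia.
rewrite eq_max eq_kk kkE !eqxx (gtn_eqF (ltnSn k)) (ltn_eqF (ltnSn k)) /=.
have [jk|njk] := eqVneq (j : nat) k.
  by rewrite jk (ltn_eqF (ltnSn k)) cj ?jk //=; ring.
have [jk1|njk1] := eqVneq (j : nat) k.+1; last by rewrite /=; ring.
by rewrite cj ?jk1 //=; ring.
Qed.

Lemma det_twin : \det (twin_mx E b) = (E ord_max ord_max - b) * (\det E + \det (set_corner E b)).
Proof.
rewrite (det_row_shear _ row_twin_last); last by rewrite eq_sym lift_max_eqF.
have vE l : (delta_mx 0 ord_max - delta_mx 0 kk : 'rV[R]_k.+2) 0 l =
    (delta_mx 0 ord_max : 'rV[R]_k.+2) 0 l - (delta_mx 0 kk : 'rV[R]_k.+2) 0 l.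
  by rewrite !mxE.
congr (_ * _); under eq_bigr do rewrite vE mulrBl.
by rewrite sumrB !sum_delta_mulr cofactor_twin_corner cofactor_twin_off opprK.
Qed.

End TwinDet.

Section PosdefTwin.
Variables (R : realFieldType) (k : nat).

Lemma vdot_lastE (a y : 'cV[R]_k.+1) :
  vdot a y = vdot (row' ord_max a) (row' ord_max y) + a ord_max 0 * y ord_max 0.
Proof. by rewrite /vdot sum_ord_max addrC; congr (_ + _); apply: eq_bigr => i _; rewrite !mxE. Qed.

Lemma row'_lastcol_twin (E : 'M[R]_k.+1) b : row' ord_max (lastcol (twin_mx E b)) = lastcol E.
Proof.
apply/matrixP => i j; rewrite !mxE.
have hi : (i < k)%N := ltn_ord i.
have li : lift ord_max (lift ord_max i : 'I_k.+1) = i :> nat.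
  exact: etrans (lift_max _) (lift_max _).
have ci : clamp_ord (lift ord_max (lift ord_max i : 'I_k.+1)) = lift ord_max i.
  by apply: ord_inj; rewrite clamp_ordE li lift_max; apply/minn_idPl/ltnW.
have cmax : clamp_ord ord_max = ord_max :> 'I_k.+1 by apply: ord_inj; rewrite clamp_ordE /=; lia.
rewrite li ci cmax /= ifF //; apply/negP; case/orP => /andP[/eqP ia /eqP ?]; first lia.
by move: hi; rewrite ia ltnn.
Qed.

Lemma lastcol_twin_max (E : 'M[R]_k.+1) b : lastcol (twin_mx E b) ord_max 0 = b.
Proof.
have kkE : lift ord_max (ord_max : 'I_k.+1) = k :> nat by exact: lift_max.
by rewrite !mxE kkE !eqxx orbT.
Qed.

Lemma posdef_twin (E : 'M[R]_k.+1) b : E^T = E ->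
  posdef_mx E -> posdef_mx (set_corner E b) -> b < E ord_max ord_max ->
  posdef_mx (twin_mx E b).
Proof.
move=> sE pE pT bc x nzx.
set F := twin_mx E b; set T := set_corner E b; set c := E ord_max ord_max.
have sF : F^T = F by exact: twin_sym.
have sT : T^T = T by exact: set_corner_sym.
set y := row' ord_max (row' ord_max x); set s := row' ord_max x ord_max 0; set t := x ord_max 0.
set z := col_ext y (s + t).
set A := lead_mx E; set a := lastcol E.
have eF : qform F x = qform E (row' ord_max x) + 2 * t * (vdot a y + b * s) + c * t ^+ 2.
  by rewrite qform_lastE // lead_twin vdot_lastE row'_lastcol_twin lastcol_twin_max twin_corner.
have eE : qform E (row' ord_max x) = qform A y + 2 * s * vdot a y + c * s ^+ 2.
  exact: qform_lastE.
have eEz : qform E z = qform A y + 2 * (s + t) * vdot a y + c * (s + t) ^+ 2.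
  by rewrite qform_lastE // row'_col_ext col_ext_max.
have eTz : qform T z = qform A y + 2 * (s + t) * vdot a y + b * (s + t) ^+ 2.
  by rewrite qform_lastE // row'_col_ext col_ext_max lead_set_corner lastcol_set_corner mxE !eqxx.
have key : 2 * qform F x = qform E z + qform T z + (c - b) * (s - t) ^+ 2.
  by rewrite eF eE eEz eTz; ring.
have cb : 0 < c - b by rewrite subr_gt0.
suff : 0 < 2 * qform F x by rewrite pmulr_rgt0.
rewrite key; have [z0|nz0] := eqVneq z 0.
  move: (z0) => /eqP; rewrite col_ext_eq0 => /andP[/eqP y0 /eqP st0].
  rewrite z0 !qform0 !add0r mulr_gt0 // exprn_even_gt0 //.
  apply: contra nzx => /eqP ts; have t0 : t = 0 by lra.
  have s0 : s = 0 by lra.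
  by rewrite -[x]col_extK -[row' ord_max x]col_extK -/y -/s -/t y0 s0 t0 !col_ext_eq0 !eqxx.
have : 0 <= (c - b) * (s - t) ^+ 2 by rewrite mulr_ge0 ?sqr_ge0 ?ltW.
by have := pE z nz0; have := pT z nz0; lra.
Qed.

End PosdefTwin.

(** * Determinant maximisers in 𝔈_k *)

Lemma det_norm_le k (C : 'M[int]_k) B : (forall i j, `|C i j| <= B) ->
  `|\det C| <= B ^+ k *+ k`!.
Proof.
move=> hB; rewrite -card_Sn -sumr_const /determinant.
apply: le_trans (ler_norm_sum _ _ _) _; apply: ler_sum => s _.
have -> : B ^+ k = \prod_(i < k) B by rewrite prodr_const card_ord.
rewrite normrM normr_sign mul1r normr_prod.
by apply: ler_prod => i _; rewrite normr_ge0 hB.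
Qed.

Lemma ex_max_nat (P : nat -> Prop) B : (exists t, P t) -> (forall t, P t -> (t <= B)%N) ->
  exists t, P t /\ forall t', P t' -> (t' <= t)%N.
Proof.
elim: B => [|B IH] [t Pt] hB.
  by exists t; split => // t' /hB; rewrite leqn0 => /eqP ->.
have [PB|nPB] := Classical_Prop.classic (P B.+1); first by exists B.+1.
apply: IH => [|t' Pt']; first by exists t.
by have := hB _ Pt'; rewrite leq_eqVlt => /orP[/eqP e|//]; rewrite e in Pt'.
Qed.

Lemma ex_max_det k (P : 'M[int]_k -> Prop) B :
  (exists E, P E) -> (forall E, P E -> 0 <= \det E) ->
  (forall E, P E -> forall i j, `|E i j| <= B) ->
  exists2 Em, P Em & forall E, P E -> \det E <= \det Em.
Proof.
move=> [E0 PE0] det_ge0 hB.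
pose Q t := exists2 E, P E & \det E = t%:Z.
have QE E : P E -> Q `|\det E|%N by move=> PE; exists E; rewrite // gez0_abs ?det_ge0.
have [t [[Em PEm dEm] tmax]] : exists t, Q t /\ forall t', Q t' -> (t' <= t)%N.
  apply: (ex_max_nat (B := `|B ^+ k *+ k`!|%N)) => [|t [E PE dE]].
    by exists `|\det E0|%N; exact: QE.
  rewrite -lez_nat -dE abszE; apply: le_trans (ler_norm _) _.
  exact: le_trans (det_norm_le (hB E PE)) (ler_norm _).
exists Em => // E PE; rewrite dEm -[\det E]gez0_abs ?det_ge0 // lez_nat.
exact: tmax (QE E PE).
Qed.

Definition realmx k (C : 'M[int]_k) : 'M[Rdefinitions.R]_k :=
  map_mx (fun z : int => (z%:~R : Rdefinitions.R)) C.

Lemma realmx_sym k (C : 'M[int]_k) : C^T = C -> (realmx C)^T = realmx C.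
Proof. by move=> sC; rewrite /realmx map_trmx sC. Qed.

Lemma det_realmx k (C : 'M[int]_k) : \det (realmx C) = (\det C)%:~R.
Proof. exact: (det_map_mx (intr : {rmorphism int -> Rdefinitions.R})). Qed.

Lemma lead_realmx k (C : 'M[int]_k.+1) : lead_mx (realmx C) = realmx (lead_mx C).
Proof. by apply/matrixP => i j; rewrite !mxE. Qed.

Lemma tilde_set_corner k (E : 'M[int]_k.+1) : tilde E = set_corner E 3.
Proof. by apply/matrixP => i j; rewrite !mxE. Qed.

Section Frak.
Variables (n : int) (r : nat) (Mr : 'M[int]_r).

Lemma det_frakC_gt0 k (C : 'M[int]_k) : in_frakC n C -> 0 < \det C.
Proof.
by case=> sC pC _ _; rewrite -(ltr0z Rdefinitions.R) -det_realmx posdef_det_gt0 ?realmx_sym.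
Qed.

Lemma frakC_entry_le k (C : 'M[int]_k) : 0 < n -> in_frakC n C -> forall i j, `|C i j| <= n.
Proof.
move=> n0 [sC pC dC _] i j.
have [->|nij] := eqVneq i j; first by rewrite dC ger0_norm // ltW.
have pos_pair (s : Rdefinitions.R) : s ^+ 2 = 1 -> 0 < 2 * n%:~R + 2 * s * (C i j)%:~R.
  move=> s2; have nz : delta_mx i 0 + s *: delta_mx j 0 != 0 :> 'cV_k.
    apply/eqP => /matrixP /(_ i 0); rewrite !mxE !eqxx (negbTE nij) /= mulr0 addr0.
    by move/eqP; rewrite oner_eq0.
  have : 0 < qform (realmx C) (delta_mx i 0 + s *: delta_mx j 0) by exact: pC.
  rewrite qformD ?realmx_sym // qformZ bformZr.
  by rewrite /qform !bform_delta !mxE !dC s2; lra.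
have h1 := pos_pair 1 (expr1n _ _).
have h2 : 0 < 2 * n%:~R + 2 * (-1) * (C i j)%:~R :> Rdefinitions.R.
  by apply: pos_pair; rewrite sqrrN expr1n.
have lo : (- n)%:~R < (C i j)%:~R :> Rdefinitions.R by rewrite mulrNz; lra.
have hi : (C i j)%:~R < n%:~R :> Rdefinitions.R by lra.
by move: lo hi; rewrite !ltr_int ler_norml => /ltW -> /ltW ->.
Qed.

Hypotheses (n_mod4 : (n = 3 %[mod 4])%Z) (n_gt3 : 3 < n).

Lemma det_twin3 k (E : 'M[int]_k.+1) : in_frakC n E ->
  \det (twin_mx E 3) = (n - 3) * (\det E + \det (tilde E)).
Proof. by case=> _ _ dE _; rewrite det_twin tilde_set_corner dE. Qed.

Lemma det_tilde k (E : 'M[int]_k.+1) : in_frakC n E ->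
  \det (tilde E) = \det E - (n - 3) * \det (lead_mx E).
Proof. by case=> _ _ dE _; rewrite tilde_set_corner det_set_corner dE; ring. Qed.

Lemma posdef_tilde k (E : 'M[int]_k.+1) : in_frakC n E -> 0 < \det (tilde E) ->
  posdef_mx (set_corner (realmx E) 3%:~R).
Proof.
case=> sE pE _ _ dT; apply: posdef_lead_det.
- exact/set_corner_sym/realmx_sym.
- by rewrite lead_set_corner; apply: posdef_lead => //; exact: realmx_sym.
- by rewrite -map_set_corner -tilde_set_corner det_realmx ltr0z.
Qed.

Lemma frakE_twin k (E : 'M[int]_k.+1) : (r <= k.+1)%N ->
  in_frakE n Mr E -> 0 < \det (tilde E) -> in_frakE n Mr (twin_mx E 3).
Proof.
move=> rk [[sE pE dE cE] lE] dT.
have hC : in_frakC n E by [].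
split; first split.
- exact: twin_sym.
- change (posdef_mx (realmx (twin_mx E 3))); rewrite /realmx map_twin.
  apply: posdef_twin; rewrite ?realmx_sym //.
  + exact: posdef_tilde.
  + by rewrite mxE dE ltr_int.
- move=> i; rewrite mxE ifF; first by rewrite dE.
  by apply/negP; case/orP => /andP[/eqP -> /eqP]; lia.
- by move=> i j; rewrite mxE; case: ifP => _; rewrite // n_mod4.
- move=> i j i' j' ei ej; have hi := ltn_ord i; have hj := ltn_ord j.
  rewrite mxE ifF; last by apply/negP; case/orP => /andP[/eqP ? /eqP ?]; lia.
  by apply: lE; rewrite clamp_ordE; lia.
Qed.

Lemma frakE_lead k (X : 'M[int]_k.+1) : (r <= k)%N -> in_frakE n Mr X -> in_frakE n Mr (lead_mx X).
Proof.
move=> rk [[sX pX dX cX] lX]; split; first split.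
- by apply/matrixP => i j; rewrite !mxE -[in LHS]sX mxE.
- change (posdef_mx (realmx (lead_mx X))); rewrite -lead_realmx.
  by apply: posdef_lead => //; exact: realmx_sym.
- by move=> i; rewrite !mxE.
- by move=> i j; rewrite !mxE.
- by move=> i j i' j' ei ej; rewrite !mxE; apply: lX; rewrite lift_max.
Qed.

Definition frakE_argmax k (Em : 'M[int]_k) : Prop :=
  in_frakE n Mr Em /\ forall E : 'M[int]_k, in_frakE n Mr E -> \det E <= \det Em.

Lemma ex_frakE_argmax k : (exists E : 'M[int]_k, in_frakE n Mr E) ->
  exists Em : 'M[int]_k, frakE_argmax Em.
Proof.
move=> ex; have n0 : 0 < n by apply: lt_trans n_gt3.
have [Em ? ?] := ex_max_det ex (fun E hE => ltW (det_frakC_gt0 hE.1))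
  (fun E hE => frakC_entry_le n0 hE.1).
by exists Em.
Qed.

Lemma frakE_argmax_twin k (Ek : 'M[int]_k.+1) : frakE_argmax Ek -> 0 < \det (tilde Ek) ->
  forall E : 'M[int]_k.+1, in_frakE n Mr E -> (n - 3) * \det E < \det (twin_mx Ek 3).
Proof.
move=> [hEk maxEk] dTk E hE; rewrite (det_twin3 hEk.1) mulrDr.
have n3 : 0 < n - 3 by rewrite subr_gt0.
have : (n - 3) * \det E <= (n - 3) * \det Ek by rewrite ler_pM2l // maxEk.
have : 0 < (n - 3) * \det (tilde Ek) by rewrite mulr_gt0.
lra.
Qed.

(* [lead_mx Em] lies in the level of the maximiser [Ek] and [twin_mx Ek 3] in that of [Em], so
   det (tilde Em) = det Em - (n - 3) det (lead_mx Em) > det Em - det (twin_mx Ek 3) >= 0. *)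
Lemma frakE_argmax_step k (Ek : 'M[int]_k.+1) : (r <= k.+1)%N ->
  frakE_argmax Ek -> 0 < \det (tilde Ek) ->
  exists2 Em : 'M[int]_k.+2, frakE_argmax Em & 0 < \det (tilde Em).
Proof.
move=> rk maxEk dTk; have hF := frakE_twin rk maxEk.1 dTk.
have [Em [hEm maxEm]] := ex_frakE_argmax (ex_intro _ _ hF).
exists Em; first by split.
have lt_lead := frakE_argmax_twin maxEk dTk (frakE_lead rk hEm).
have le_twin := maxEm _ hF.
by rewrite (det_tilde hEm.1) subr_gt0; apply: lt_le_trans le_twin.
Qed.

End Frak.

(* Indexing the levels by [d + r] makes the base case [Mr] itself, without a cast. *)
Lemma ex_frakE_argmax_tilde n r (Mr : 'M[int]_r.+1) d :
  (n = 3 %[mod 4])%Z -> 3 < n -> in_frakC n Mr -> 0 < \det (tilde Mr) ->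
  exists2 Ek : 'M[int]_((d + r).+1), frakE_argmax n Mr Ek & 0 < \det (tilde Ek).
Proof.
move=> n_mod4 n_gt3 hMr dTr; elim: d => [|d [Ek maxEk dTk]].
  exists Mr => //; split => [|E [_ lE]]; first by split => // i j i' j' /val_inj-> /val_inj->.
  by have -> : E = Mr by apply/matrixP => i j; apply: lE.
have rk : (r < (d + r).+1)%N by rewrite ltnS leq_addl.
by have := frakE_argmax_step n_mod4 n_gt3 rk maxEk dTk; rewrite addSn.
Qed.

Theorem theorem7 (n : int) (r m : nat) (Mr : 'M[int]_r) :
  (n = 3 %[mod 4])%Z -> 3 < n ->
  (1 <= r)%N -> (r < m)%N ->
  in_frakC n Mr -> 0 < \det (tilde Mr) ->
  (exists E' : 'M[int]_(m.-1), in_frakE n Mr E') /\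
  (exists E : 'M[int]_m, in_frakE n Mr E /\
     forall E' : 'M[int]_(m.-1), in_frakE n Mr E' -> (n - 3) * \det E' < \det E).
Proof.
move=> n_mod4 n_gt3; case: r Mr => // r Mr _ rm hMr dTr.
have [d ->] : exists d, m = (d + r).+2 by exists (m - r.+2)%N; lia.
have [Ek maxEk dTk] := ex_frakE_argmax_tilde d n_mod4 n_gt3 hMr dTr.
split; first by exists Ek; case: maxEk.
have rk : (r < (d + r).+1)%N by rewrite ltnS leq_addl.
exists (twin_mx Ek 3); split; first by have := frakE_twin n_mod4 n_gt3 rk maxEk.1 dTk.
by move=> E' /(frakE_argmax_twin n_gt3 maxEk dTk).
Qed.
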